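(* Let $D$ be a finite set of documents, each document being a finite set of terms, and let $m$ be a positive integer dividing $|D|$. For a bijection $\pi$ assigning to the documents the identifiers $1,\dots,|D|$, let $\mathcal{P}(\pi)$ be the total Delta-encoded size of all postings lists of the single-node index in which document $d$ has identifier $\pi(d)$. For a partition $g$ of $D$ into $m$ disjoint sets (nodes) of $|D|/m$ documents each, let $\mathcal{P}^m(\pi,g)$ be the sum over the $m$ nodes of the total Delta-encoded size of all postings lists of that node's index, where within each node the documents receive identifiers $1,\dots,|D|/m$ in the order induced by $\pi$. If $\pi$ is drawn uniformly at random among all $|D|!$ bijections and, independently, $g$ is drawn uniformly at random among all such equal partitions, then \[\mathbb{E}_{\pi,g}\left[\mathcal{P}(\pi)-\mathcal{P}^m(\pi,g)\right]\ \ge\ 0\ .\]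
   Context: Index model: for an index over a set of documents with distinct identifiers, the postings list of a term $t$ consists of the identifiers $1\le d^t_1<d^t_2<\dots<d^t_{n_t}$ of the documents containing $t$; its encoded size is $\delta(d^t_1)+\sum_{j=2}^{n_t}\delta(d^t_j-d^t_{j-1})$, where for a positive integer $k$ the Delta encoding length is $\delta(k)=1+\lfloor\log_2 k\rfloor+2\lfloor\log_2(1+\lfloor\log_2 k\rfloor)\rfloor$. The total size of an index is the sum of the encoded sizes of the postings lists of all terms occurring in its documents (no dictionary overhead is counted). *)

From mathcomp Require Import all_boot all_order all_algebra.
Set Implicit Arguments. Unset Strict Implicit. Unset Printing Implicit Defensive.
Import GRing.Theory Num.Theory.

(* Delta code length: delta k = 1 + floor(log2 k) + 2 floor(log2 (1 + floor(log2 k))),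
   for k >= 1 (trunc_log 2 k = floor (log2 k) for k >= 1). *)
Definition delta (k : nat) : nat :=
  1 + trunc_log 2 k + 2 * trunc_log 2 (1 + trunc_log 2 k).

Fixpoint gaps_size (prev : nat) (s : seq nat) : nat :=
  match s with
  | [::] => 0
  | x :: s' => delta (x - prev) + gaps_size x s'
  end.

Definition postings_size (s : seq nat) : nat := gaps_size 0 s.

Section Index.
Variables (Doc Term : finType) (terms : Doc -> {set Term}).

Definition postings (S : {set Doc}) (id : Doc -> nat) (t : Term) : seq nat :=
  sort leq [seq id d | d in [set d in S | t \in terms d]].

Definition index_size (S : {set Doc}) (id : Doc -> nat) : nat :=
  \sum_(t in \bigcup_(d in S) terms d) postings_size (postings S id t).

(* Bijections from documents to identifiers 1..|D| (pi d = value + 1). *)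
Definition bijections : {set {ffun Doc -> 'I_#|Doc|}} :=
  [set f : {ffun Doc -> 'I_#|Doc|} | injectiveb f].

Definition P1 (pi : {ffun Doc -> 'I_#|Doc|}) : nat :=
  index_size setT (fun d => (pi d).+1).

Definition equal_partitions (m : nat) : {set {set {set Doc}}} :=
  [set g | [&& partition g [set: Doc], #|g| == m &
               [forall B in g, #|B| == #|Doc| %/ m]]].

Definition local_id (pi : {ffun Doc -> 'I_#|Doc|}) (B : {set Doc}) (d : Doc) : nat :=
  #|[set d' in B | (pi d' <= pi d)%N]|.

Definition Pm (pi : {ffun Doc -> 'I_#|Doc|}) (g : {set {set Doc}}) : nat :=
  \sum_(B in g) index_size B (local_id pi B).

Definition expected_gain (m : nat) : rat :=
  ((\sum_(pi in bijections) \sum_(g in equal_partitions m)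
      ((P1 pi)%:R - (Pm pi g)%:R : rat))
  / (#|bijections| * #|equal_partitions m|)%N%:R)%R.

End Index.

From Pilot Require Import Defs.
From mathcomp Require Import all_boot all_algebra all_fingroup.
Set Implicit Arguments. Unset Strict Implicit. Unset Printing Implicit Defensive.
Import GRing.Theory Num.Theory.

(* Concatenating the nodes one
   after the other, in increasing order of their largest [pi]-identifier and each
   keeping its local order, numbers all documents from 1 to |D|.  In a postings
   list of this global numbering, the predecessor of a document either lies in
   the same node, at the same distance as locally, or in an earlier node, hence
   at or below the node's offset; so every local gap is at most the global one,
   and since delta is monotone, P^m(pi, g) <= P(concat pi g).  Relabelling the
   documents by a permutation commutes with the construction, and permutations
   act simply transitively on numberings, so concat pi g is uniformly distributed
   when (pi, g) is; hence E[P^m] <= E[P(concat pi g)] = E[P]. *)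

Lemma leq_delta : {homo delta : a b / a <= b}.
Proof.
move=> a b ab; rewrite /delta leq_add ?leq_add2l ?leq_trunc_log //.
by rewrite leq_mul2l leq_trunc_log ?orbT // ltnS leq_trunc_log.
Qed.

Lemma gaps_sizeE p s : sorted ltn s -> all (leq p) s ->
  gaps_size p s = \sum_(x <- s) delta (x - maxn p (\max_(y <- s | y < x) y)).
Proof.
elim: s p => [|x s IH] p; first by rewrite big_nil.
move=> /= pxs /andP[px ps].
have xs : all (ltn x) s by apply: order_path_min pxs; exact: ltn_trans.
rewrite big_cons IH ?(path_sorted pxs) //; last first.
  by apply/allP=> y /(allP xs) /ltnW.
congr (_ + _).
  rewrite big_cons ltnn big_seq_cond big1 ?maxn0 // => y /andP[/(allP xs) /= xy].
  by move/(ltn_trans xy); rewrite ltnn.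
rewrite !big_seq; apply: eq_bigr => z /(allP xs) /= xz.
by rewrite big_cons xz maxnA (maxn_idPr px).
Qed.

Section Gaps.
Variable T : finType.

(* The empty maximum is 0, so the first element's gap is its own identifier. *)
Definition gap (A : {set T}) (id : T -> nat) (x : T) : nat :=
  id x - \max_(y in A | id y < id x) id y.

Lemma postings_size_gaps (A : {set T}) (id : T -> nat) :
  {in A &, injective id} ->
  postings_size (sort leq [seq id x | x in A]) = \sum_(x in A) delta (gap A id x).
Proof.
move=> id_inj; set s := [seq id x | x in A].
have s_uniq : uniq s.
  by rewrite map_inj_in_uniq ?enum_uniq // => x y; rewrite !mem_enum; apply: id_inj.
rewrite /postings_size gaps_sizeE; last 2 first.
- by rewrite ltn_sorted_uniq_leq sort_uniq s_uniq sort_sorted //; exact: leq_total.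
- exact/allP.
rewrite (perm_big _ (permEl (perm_sort leq s))) big_map big_enum /=.
apply: eq_bigr => x _; rewrite max0n (perm_big _ (permEl (perm_sort leq _))).
by rewrite big_map big_enum_cond.
Qed.

Lemma gap_shift (A A' : {set T}) (id id' : T -> nat) (c : nat) (x : T) :
  A' \subset A -> x \in A' ->
  {in A', forall y, id y = c + id' y} ->
  {in A :\: A', forall y, id y < id x -> id y <= c} ->
  gap A' id' x <= gap A id x.
Proof.
move=> sA'A xA' id_shift id_below; rewrite /gap.
suff max_le : \max_(y in A | id y < id x) id y <= c + \max_(y in A' | id' y < id' x) id' y.
  by apply: leq_trans (leq_sub2l _ max_le); rewrite id_shift // subnDl.
apply/bigmax_leqP => y /andP[yA lt_yx].
have [yA' | yA'] := boolP (y \in A'); last first.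
  by rewrite (leq_trans (id_below y _ lt_yx)) ?leq_addr // inE yA' yA.
rewrite id_shift // leq_add2l; apply: leq_bigmax_cond; rewrite yA' /=.
by rewrite -(ltn_add2l c) -!id_shift.
Qed.

End Gaps.

Section IndexGaps.
Variables (Doc Term : finType) (terms : Doc -> {set Term}).

Definition docs_with (S : {set Doc}) (t : Term) : {set Doc} :=
  [set d in S | t \in terms d].

Lemma index_size_gaps (S : {set Doc}) (id : Doc -> nat) : {in S &, injective id} ->
  Defs.index_size terms S id =
  \sum_(t : Term) \sum_(d in docs_with S t) delta (gap (docs_with S t) id d).
Proof.
move=> id_inj; rewrite /index_size [RHS](bigID [in \bigcup_(d in S) terms d]) /=.
rewrite [X in _ + X]big1 ?addn0 => [|t tNS]; last first.
  rewrite big_pred0 // => d; rewrite inE; apply/andP=> -[dS td].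
  by case/negP: tNS; apply/bigcupP; exists d.
apply: eq_bigr => t _; rewrite postings_size_gaps // => x y.
by rewrite !inE => /andP[xS _] /andP[yS _]; apply: id_inj.
Qed.

End IndexGaps.

Section Concatenation.
Variables (Doc Term : finType) (terms : Doc -> {set Term}).
Local Notation N := #|Doc|.
Variables (pi : {ffun Doc -> 'I_N}) (g : {set {set Doc}}).

Definition node_top (d : Doc) : nat := \max_(d' in pblock g d) pi d'.

Definition earlier_docs (d : Doc) : {set Doc} := [set d' | node_top d' < node_top d].

Definition concat_id (d : Doc) : nat :=
  #|earlier_docs d| + local_id pi (pblock g d) d.

Definition concat_ids : {ffun Doc -> 'I_N} :=
  [ffun d => insubd (pi d) (concat_id d).-1].

Hypotheses (pi_inj : injective pi) (g_part : partition g [set: Doc]).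

Let g_triv : trivIset g. Proof. by case/and3P: g_part. Qed.

Lemma mem_pblockT d : d \in pblock g d.
Proof. by case/and3P: g_part => /eqP cov _ _; rewrite mem_pblock cov inE. Qed.

Lemma local_id_gt0 (B : {set Doc}) d : d \in B -> 0 < local_id pi B d.
Proof. by move=> dB; apply/card_gt0P; exists d; rewrite inE dB /=. Qed.

Lemma local_id_lt (B : {set Doc}) x y : y \in B -> pi x < pi y ->
  local_id pi B x < local_id pi B y.
Proof.
move=> yB lt_xy; apply/proper_card/properP; split.
  by apply/subsetP=> z; rewrite !inE => /andP[-> /leq_trans]; apply; apply: ltnW.
by exists y; rewrite !inE yB //= -ltnNge.
Qed.

Lemma local_id_inj (B : {set Doc}) : {in B &, injective (local_id pi B)}.
Proof.
move=> x y xB yB e; apply/pi_inj/val_inj/eqP.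
by case: ltngtP => // /local_id_lt; [move/(_ _ yB) | move/(_ _ xB)]; rewrite e ltnn.
Qed.

Lemma node_top_pblock x d : x \in pblock g d -> node_top x = node_top d.
Proof. by move=> xd; rewrite /node_top (same_pblock g_triv xd). Qed.

Lemma node_top_inj x y : node_top x = node_top y -> pblock g x = pblock g y.
Proof.
have top_at z : exists2 z', z' \in pblock g z & node_top z = pi z'.
  have nonempty : 0 < #|pblock g z| by apply/card_gt0P; exists z; apply: mem_pblockT.
  by have [z' ? ?] := eq_bigmax_cond (fun d => pi d : nat) nonempty; exists z'.
have [x' x'x ->] := top_at x; have [y' y'y ->] := top_at y.
move=> /val_inj /pi_inj eq_x'y'.
by rewrite -(same_pblock g_triv x'x) -(same_pblock g_triv y'y) eq_x'y'.
Qed.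

Lemma concat_idE d :
  concat_id d = #|earlier_docs d :|: [set d' in pblock g d | pi d' <= pi d]|.
Proof.
rewrite cardsU (_ : _ :&: _ = set0) ?cards0 ?subn0 //.
apply/setP=> x; rewrite !inE; apply/negbTE/andP => -[lt /andP[xd _]].
by move: lt; rewrite (node_top_pblock xd) ltnn.
Qed.

Lemma concat_id_le_card d : concat_id d <= N.
Proof. by rewrite concat_idE max_card. Qed.

Lemma earlier_lt_concat_id d : #|earlier_docs d| < concat_id d.
Proof. by rewrite /concat_id -addn1 leq_add2l local_id_gt0 ?mem_pblockT. Qed.

Lemma concat_id_le_earlier x d :
  node_top x < node_top d -> concat_id x <= #|earlier_docs d|.
Proof.
move=> lt_xd; rewrite concat_idE; apply/subset_leq_card/subsetP=> y.
rewrite !inE => /orP[/ltn_trans -> // | /andP[yx _]].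
by rewrite (node_top_pblock yx).
Qed.

Lemma concat_id_lt x y : node_top x < node_top y -> concat_id x < concat_id y.
Proof. by move/concat_id_le_earlier/leq_ltn_trans; apply; apply: earlier_lt_concat_id. Qed.

Lemma concat_id_inj : injective concat_id.
Proof.
move=> x y e; case: (ltngtP (node_top x) (node_top y)) => [|| eq_top].
- by move/concat_id_lt; rewrite e ltnn.
- by move/concat_id_lt; rewrite e ltnn.
have eq_block := node_top_inj eq_top.
move: e; rewrite /concat_id /earlier_docs eq_top eq_block => /addnI.
by apply: local_id_inj; rewrite ?mem_pblockT // -eq_block mem_pblockT.
Qed.

Lemma concat_idsE d : (concat_ids d).+1 = concat_id d.
Proof.
have pos := leq_ltn_trans (leq0n _) (earlier_lt_concat_id d).
by rewrite ffunE val_insubd prednK // concat_id_le_card /= prednK.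
Qed.

Lemma concat_ids_inj : injective concat_ids.
Proof.
by move=> x y /(congr1 (fun i : 'I_N => i.+1)); rewrite !concat_idsE => /concat_id_inj.
Qed.

Lemma P1_concat_ids : P1 terms concat_ids = Defs.index_size terms setT concat_id.
Proof.
apply: eq_bigr => t _; congr (postings_size (sort _ _)).
by apply: eq_map => d; rewrite concat_idsE.
Qed.

Lemma gap_pblock_le_concat t d : d \in docs_with terms setT t ->
  gap (docs_with terms (pblock g d) t) (local_id pi (pblock g d)) d
  <= gap (docs_with terms setT t) concat_id d.
Proof.
rewrite !inE /= => dt; apply: (gap_shift (c := #|earlier_docs d|)).
- by apply/subsetP=> x; rewrite !inE => /andP[_ ->].
- by rewrite inE mem_pblockT.
- move=> x; rewrite inE => /andP[xd _].
  by rewrite /concat_id (same_pblock g_triv xd) /earlier_docs (node_top_pblock xd).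
move=> x; rewrite !inE /= => /andP[xNd xt] lt_xd; rewrite xt andbT in xNd.
case: (ltngtP (node_top x) (node_top d)) => [/concat_id_le_earlier // | |].
- by move/concat_id_lt; rewrite ltnNge ltnW.
by move/node_top_inj => eq_block; rewrite -eq_block mem_pblockT in xNd.
Qed.

Lemma Pm_le_P1_concat : Pm terms pi g <= P1 terms concat_ids.
Proof.
rewrite P1_concat_ids index_size_gaps; last by move=> x y _ _ /concat_id_inj.
rewrite /Pm (eq_bigr _ (fun B _ => index_size_gaps terms (@local_id_inj B))).
rewrite exchange_big /=; apply: leq_sum => t _.
have cov : cover g = setT by case/and3P: g_part => /eqP.
rewrite (eq_bigr (fun B : {set Doc} => \sum_(d in B | t \in terms d)
  delta (gap (docs_with terms (pblock g d) t) (local_id pi (pblock g d)) d))); last first.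
  move=> B Bg; apply: eq_big => [d | d]; first by rewrite inE.
  by rewrite inE => /andP[dB _]; rewrite (def_pblock g_triv Bg dB).
rewrite -big_trivIset_cond // cov.
rewrite (eq_bigl [in docs_with terms setT t]) => [|d]; last by rewrite !inE.
by apply: leq_sum => d dt; apply/leq_delta/gap_pblock_le_concat.
Qed.

End Concatenation.

Lemma big_stable_inj (R : Type) (idx : R) (op : Monoid.com_law idx)
    (T : finType) (f : T -> T) (A : {set T}) (F : T -> R) :
  injective f -> (forall x, x \in A -> f x \in A) ->
  \big[op/idx]_(x in A) F (f x) = \big[op/idx]_(x in A) F x.
Proof.
move=> f_inj f_stable; have fA : f @: A = A.
  apply/eqP; rewrite eqEcard card_imset // leqnn andbT.
  by apply/subsetP=> _ /imsetP[x xA ->]; apply: f_stable.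
by rewrite -[in RHS]fA big_imset // => x y _ _ /f_inj.
Qed.

Section EquivariantAverage.
Variables (gT : finGroupType) (X Y : finType).
Variables (actX : gT -> X -> X) (actY : gT -> Y -> Y) (S : {set X}) (W : {set Y}).
Hypotheses (actX_inj : forall a, injective (actX a)) (actY_inj : forall a, injective (actY a)).
Hypothesis actY_stable : forall a y, y \in W -> actY a y \in W.
Hypothesis orbit_inj : forall x, x \in S -> injective (actX^~ x).
Hypothesis orbit_full : forall x, x \in S -> [set actX a x | a : gT] = S.

Lemma actX_stable a x : x \in S -> actX a x \in S.
Proof. by move=> xS; rewrite -(orbit_full xS) imset_f. Qed.

Lemma sum_orbit (F : X -> nat) x : x \in S -> \sum_(a : gT) F (actX a x) = \sum_(x' in S) F x'.
Proof.
move=> xS; rewrite -(orbit_full xS) big_imset /=; last by move=> a b _ _ /orbit_inj->.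
by apply: eq_bigl => a; rewrite inE.
Qed.

Lemma card_mul_sum_equivariant (Phi : X -> Y -> X) (F : X -> nat) :
  {in S & W, forall x y, Phi x y \in S} ->
  (forall a, {in S & W, forall x y, Phi (actX a x) (actY a y) = actX a (Phi x y)}) ->
  #|gT| * \sum_(x in S) \sum_(y in W) F (Phi x y) =
  \sum_(x in S) \sum_(y in W) \sum_(x' in S) F x'.
Proof.
move=> Phi_in Phi_equiv; rewrite -sum_nat_const.
transitivity (\sum_(a : gT) \sum_(x in S) \sum_(y in W) F (actX a (Phi x y))).
  apply: eq_bigr => a _; rewrite -(big_stable_inj _ _ (@actX_inj a) (@actX_stable a)).
  apply: eq_bigr => x xS; rewrite -(big_stable_inj _ _ (@actY_inj a) (@actY_stable a)).
  by apply: eq_bigr => y yW; rewrite Phi_equiv.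
rewrite exchange_big; apply: eq_bigr => x xS.
rewrite exchange_big; apply: eq_bigr => y yW.
exact: sum_orbit (Phi_in _ _ xS yW).
Qed.

Lemma sum_equivariant (Phi : X -> Y -> X) (F : X -> nat) :
  {in S & W, forall x y, Phi x y \in S} ->
  (forall a, {in S & W, forall x y, Phi (actX a x) (actY a y) = actX a (Phi x y)}) ->
  \sum_(x in S) \sum_(y in W) F (Phi x y) = \sum_(x in S) \sum_(y in W) F x.
Proof.
move=> Phi_in Phi_equiv; have gT_gt0 : 0 < #|gT| by apply/card_gt0P; exists 1%g.
by apply/eqP; rewrite -(eqn_pmul2l gT_gt0) !card_mul_sum_equivariant.
Qed.

End EquivariantAverage.

Section Relabelling.
Variable Doc : finType.
Local Notation N := #|Doc|.
Implicit Types (a : {perm Doc}) (pi : {ffun Doc -> 'I_N}) (g : {set {set Doc}}).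

Definition relabel_ids a pi : {ffun Doc -> 'I_N} := [ffun d => pi (a d)].

Definition relabel_part a g : {set {set Doc}} := [set a @^-1: B | B : {set Doc} in g].

Lemma preimset_perm a (B : {set Doc}) : a @^-1: B = (a^-1)%g @: B.
Proof. by rewrite (can_imset_pre _ (permKV a)). Qed.

Lemma relabel_partE a g : relabel_part a g = [set (a^-1)%g @: B | B : {set Doc} in g].
Proof. by apply: eq_imset => B; rewrite preimset_perm. Qed.

Lemma relabel_ids_inj a : injective (relabel_ids a).
Proof.
move=> pi pi' /ffunP eq_pi; apply/ffunP=> d.
by have := eq_pi ((a^-1)%g d); rewrite !ffunE permKV.
Qed.

Lemma relabel_part_inj a : injective (relabel_part a).
Proof.
move=> g g'; rewrite !relabel_partE.
by apply/imset_inj/imset_inj/perm_inj.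
Qed.

Lemma relabel_part_partition a g :
  partition g [set: Doc] -> partition (relabel_part a g) [set: Doc].
Proof.
rewrite -{2}(preimsetT a) preimset_perm relabel_partE.
by rewrite imset_partition //; apply: perm_inj.
Qed.

Lemma relabel_part_equal m a g :
  g \in equal_partitions Doc m -> relabel_part a g \in equal_partitions Doc m.
Proof.
rewrite !inE => /and3P[g_part card_g /forall_inP g_sizes].
rewrite relabel_part_partition // card_imset ?card_g /=; last first.
  by move=> B C; rewrite !preimset_perm; apply/imset_inj/perm_inj.
apply/forall_inP => _ /imsetP[B Bg ->].
by rewrite card_preimset ?g_sizes //; apply: perm_inj.
Qed.

Lemma pblock_relabel a g d : partition g [set: Doc] ->
  pblock (relabel_part a g) d = a @^-1: pblock g (a d).
Proof.
move=> g_part; apply: def_pblock; first by case/and3P: (relabel_part_partition a g_part).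
  by apply: imset_f; rewrite pblock_mem //; case/and3P: g_part => /eqP-> _ _.
by rewrite inE (mem_pblockT g_part).
Qed.

Lemma local_id_relabel a pi (B : {set Doc}) d :
  local_id (relabel_ids a pi) (a @^-1: B) d = local_id pi B (a d).
Proof.
rewrite /local_id -[RHS](card_preimset _ (@perm_inj _ a)).
by apply: eq_card => x; rewrite !inE !ffunE.
Qed.

Lemma node_top_relabel a pi g d : partition g [set: Doc] ->
  node_top (relabel_ids a pi) (relabel_part a g) d = node_top pi g (a d).
Proof.
move=> g_part; rewrite /node_top pblock_relabel // preimset_perm big_imset /=.
  by apply: eq_bigr => x _; rewrite ffunE permKV.
by move=> x y _ _; apply: perm_inj.
Qed.

Lemma concat_id_relabel a pi g d : partition g [set: Doc] ->
  concat_id (relabel_ids a pi) (relabel_part a g) d = concat_id pi g (a d).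
Proof.
move=> g_part; rewrite /concat_id pblock_relabel // local_id_relabel; congr (_ + _).
rewrite -[RHS](card_preimset _ (@perm_inj _ a)); apply: eq_card => x.
by rewrite !inE !node_top_relabel.
Qed.

Lemma concat_ids_relabel a pi g : partition g [set: Doc] ->
  concat_ids (relabel_ids a pi) (relabel_part a g) = relabel_ids a (concat_ids pi g).
Proof.
by move=> g_part; apply/ffunP=> d; rewrite !ffunE concat_id_relabel.
Qed.

Lemma relabel_orbit_inj pi : pi \in bijections Doc -> injective (relabel_ids^~ pi).
Proof.
rewrite inE => /injectiveP pi_inj a b /ffunP eq_ab; apply/permP=> d.
by apply: pi_inj; have := eq_ab d; rewrite !ffunE.
Qed.

Lemma relabel_orbit pi : pi \in bijections Doc ->
  [set relabel_ids a pi | a : {perm Doc}] = bijections Doc.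
Proof.
move=> pi_bij; apply/eqP; rewrite eqEcard card_imset; last exact: relabel_orbit_inj.
apply/andP; split.
  move: pi_bij; rewrite inE => /injectiveP pi_inj.
  apply/subsetP=> _ /imsetP[a _ ->]; rewrite inE; apply/injectiveP=> x y.
  by rewrite !ffunE => /pi_inj /perm_inj.
by rewrite card_inj_ffuns card_ord ffactnn -cardsT -card_perm max_card.
Qed.

End Relabelling.

Lemma sum_Pm_le_sum_P1 (Doc Term : finType) (terms : Doc -> {set Term}) (m : nat) :
  \sum_(pi in bijections Doc) \sum_(g in equal_partitions Doc m) Pm terms pi g
  <= \sum_(pi in bijections Doc) \sum_(g in equal_partitions Doc m) P1 terms pi.
Proof.
have part_of g : g \in equal_partitions Doc m -> partition g [set: Doc].
  by rewrite inE => /and3P[].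
apply: (@leq_trans (\sum_(pi in bijections Doc) \sum_(g in equal_partitions Doc m)
                      P1 terms (concat_ids pi g))).
  apply: leq_sum => pi; rewrite inE => /injectiveP pi_inj.
  by apply: leq_sum => g /part_of; apply: Pm_le_P1_concat.
rewrite (sum_equivariant (actX := @relabel_ids Doc) (actY := @relabel_part Doc)) //.
- exact: relabel_ids_inj.
- exact: relabel_part_inj.
- exact: relabel_part_equal.
- exact: relabel_orbit_inj.
- exact: relabel_orbit.
- move=> pi g; rewrite inE => /injectiveP pi_inj /part_of g_part.
  by rewrite inE; apply/injectiveP/concat_ids_inj.
- by move=> a pi g _ /part_of; apply: concat_ids_relabel.
Qed.

Local Open Scope ring_scope.

Theorem mainTheorem2 (Doc Term : finType) (terms : Doc -> {set Term})
  (terms_inj : injective terms) (m : nat)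
  (m_pos : (0 < m)%N) (m_dvd : (m %| #|Doc|)%N) :
  0 <= expected_gain terms m.
Proof.
rewrite /expected_gain divr_ge0 //.
under eq_bigr do rewrite sumrB.
rewrite sumrB subr_ge0.
have := sum_Pm_le_sum_P1 terms m; rewrite -(ler_nat rat) !natr_sum.
by under eq_bigr do rewrite natr_sum; under [X in _ <= X -> _]eq_bigr do rewrite natr_sum.
Qed.
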